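(* Let $g\in\mathrm{SL}_3(\mathbb{R})$ and suppose there are $\mu>1$ and a positive integer $m$ such that $P_0:=\ker(g^m-\mu\,\mathrm{id})$ is two-dimensional and $L_0:=\ker(g^m-\mu^{-2}\mathrm{id})$ is one-dimensional. Let $X\subset\mathbb{RP}^2$ be a finite $g$-invariant set of lines contained in $P_0$, and let $\mathcal{A}$ be the set of prepared neighborhoods of $X$. Then $A_1\cap\cdots\cap A_n\in\mathcal{A}$ for all $A_1,\dots,A_n\in\mathcal{A}$, and $\bigcap_{A\in\mathcal{A}}A=\bigcup_{x\in X}\mathbb{P}(x\oplus L_0)$.
   Context: For a line $x$ and the line $L_0$, $\mathbb{P}(x\oplus L_0)\subset\mathbb{RP}^2$ denotes the set of lines contained in the subspace $x\oplus L_0$. A set $A\subset\mathbb{RP}^2$ is a prepared neighborhood of $X$ (with respect to $g$) if $X$ is contained in the interior of $A$, $g(A)=A$, and $A=\bigcup_{x\in A}\mathbb{P}(x\oplus L_0)$. *)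

From HB Require Import structures.
From mathcomp Require Import all_boot all_order all_algebra.
From mathcomp Require Import all_classical all_reals all_analysis.
Set Implicit Arguments. Unset Strict Implicit. Unset Printing Implicit Defensive.
Import Order.TTheory GRing.Theory Num.Theory.
Import numFieldNormedType.Exports.
Local Open Scope classical_set_scope.
Local Open Scope ring_scope.

(* Points of RP^2 = one-dimensional linear subspaces of R^3. *)
Definition line (R : realType) := {L : {vspace 'cV[R]_3} | \dim L == 1%N}.

Definition mxlin (R : realType) (M : 'M[R]_3) : 'End('cV[R]_3) :=
  linfun (fun v : 'cV[R]_3 => M *m v).

Definition mxker (R : realType) (M : 'M[R]_3) : {vspace 'cV[R]_3} := lker (mxlin M).

(* Quotient topology on RP^2: U is open iff its preimage in R^3 \ {0}
   (which is open in R^3) is open. *)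
Definition RP2_open (R : realType) (U : set (line R)) : Prop :=
  open (s := 'cV[R]_3) [set v : 'cV[R]_3 | v != 0 /\ exists x : line R, U x /\ val x = <[v]>%VS].

Definition RP2_interior (R : realType) (A : set (line R)) : set (line R) :=
  [set x | exists U : set (line R), [/\ RP2_open U, U x & U `<=` A]].

Definition RP2_image (R : realType) (g : 'M[R]_3) (A : set (line R)) : set (line R) :=
  [set y | exists2 x, A x & val y = (mxlin g @: val x)%VS].

Definition Pspace (R : realType) (V : {vspace 'cV[R]_3}) : set (line R) :=
  [set y | (val y <= V)%VS].

Definition prepared (R : realType) (g : 'M[R]_3) (L0 : {vspace 'cV[R]_3})
    (X A : set (line R)) : Prop :=
  [/\ X `<=` RP2_interior A,
      RP2_image g A = A &
      A = \bigcup_(x in A) Pspace (val x + L0)%VS].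

From HB Require Import structures.
From mathcomp Require Import all_boot all_order all_algebra.
From mathcomp Require Import all_classical all_reals all_analysis.
Import Order.TTheory GRing.Theory Num.Theory.
Import numFieldNormedType.Exports.
Local Open Scope classical_set_scope.
Local Open Scope ring_scope.
Set Implicit Arguments. Unset Strict Implicit.

(* An intersection of finitely many prepared neighborhoods is again one: finite
   intersections of open sets are open, and g acts bijectively on lines, so the
   image of an intersection is the intersection of the images.
   Every prepared neighborhood contains X, and being a union of sets P(x + L0)
   it then contains P(x + L0) for x in X. Conversely, let y lie in no plane
   x + L0 with x in X. Since R^3 = P0 + L0, g^m - mu maps R^3 into L0, so g^m
   fixes every plane containing L0 and the planes W_k = g^k (y + L0) form a
   finite family. The lines lying in no W_k, together with L0, form a prepared
   neighborhood that misses y: a line x of X inside W_k would give a line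
   g^-k x of X inside y + L0, whence x + L0 = y + L0 contains y. *)

Lemma open_bigcap_finite (T : topologicalType) (I : choiceType) (D : set I)
    (F : I -> set T) :
  finite_set D -> (forall i, D i -> open (F i)) -> open (\bigcap_(i in D) F i).
Proof.
move=> finD oF; rewrite -[X in open X]setCK setC_bigcap openC.
by apply: closed_bigcup => // i Di; rewrite closedC; exact: oF.
Qed.

Section ClosedSubspace.
Variables (R : realType) (n : nat).

Lemma lfun_coordE (h : 'End('cV[R]_n)) v i :
  h v i 0 = \sum_j v j 0 * h (delta_mx j 0) i 0.
Proof.
rewrite {1}(matrix_sum_delta v) linear_sum summxE; apply: eq_bigr => j _.
by rewrite big_ord1 linearZ /= mxE; congr (_ * h (delta_mx _ _) _ _); apply/val_inj.
Qed.

Lemma continuous_lfun_coord (h : 'End('cV[R]_n)) i :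
  continuous (fun v : 'cV[R]_n => h v i 0).
Proof.
under [X in continuous X]funext => v do rewrite lfun_coordE.
apply: continuous_big => [|j _]; first exact: add_continuous.
by move=> v; apply: continuousM; [exact: coord_continuous | exact: cst_continuous].
Qed.

Lemma closed_lker (h : 'End('cV[R]_n)) : closed [set v | v \in lker h].
Proof.
have -> : [set v | v \in lker h] =
    \bigcap_(i in [set: 'I_n]) (fun v => h v i 0) @^-1` [set 0].
  apply/seteqP; split => v /=; rewrite memv_ker.
    by move=> /eqP hv0 i _ /=; rewrite hv0 mxE.
  by move=> hv0; apply/eqP/matrixP => i j; rewrite ord1 mxE; exact: hv0.
apply: closed_bigI => i _; apply: preimage_closed; last exact: closed_eq.
by move=> v _; exact: continuous_lfun_coord.
Qed.

Lemma closed_vspace (U : {vspace 'cV[R]_n}) : closed [set v | v \in U].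
Proof.
have -> : [set v | v \in U] = [set v | v \in lker (\1 - projv U)%VF].
  apply/seteqP; split => v /=; rewrite memv_ker add_lfunE opp_lfunE id_lfunE.
    by move=> vU; rewrite projv_id ?subrr.
  by rewrite subr_eq0 => /eqP ->; exact: memv_proj.
exact: closed_lker.
Qed.

End ClosedSubspace.

Section SumOfLines.
Variables (K : fieldType) (vT : vectType K).
Implicit Types U V L : {vspace vT}.

Lemma dimv_add_lines U V :
  \dim U = 1%N -> \dim V = 1%N -> U != V -> \dim (U + V) = 2%N.
Proof.
move=> dimU dimV neqUV; have := dimv_sum_cap U V; rewrite dimU dimV.
suff -> : \dim (U :&: V) = 0%N by rewrite addn0.
have : (\dim (U :&: V) <= 1)%N by rewrite -dimU dimvS ?capvSl.
rewrite leq_eqVlt ltnS leqn0 => /orP [/eqP capV1 | /eqP //].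
have /eqP capU : (U :&: V == U)%VS by rewrite eqEdim capvSl dimU capV1.
have /eqP capV : (U :&: V == V)%VS by rewrite eqEdim capvSr dimV capV1.
by move: neqUV; rewrite -capU {1}capV capU eqxx.
Qed.

Lemma addv_lines_eq U V L :
  \dim U = 1%N -> \dim V = 1%N -> \dim L = 1%N -> U != L ->
  (U + L <= V + L)%VS -> (U + L)%VS = (V + L)%VS.
Proof.
move=> dimU dimV dimL neqUL sUV; apply/eqP.
rewrite eqEdim sUV (dimv_add_lines dimU dimL neqUL) /=.
by have [+ _] := dimv_add_leqif V L; rewrite dimV dimL.
Qed.

End SumOfLines.

Section ProjectivePlane.
Variable R : realType.
Implicit Types (U : set (line R)) (x : line R).

Lemma line_dim x : \dim (val x) = 1%N.
Proof. exact/eqP/(valP x). Qed.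

Lemma line_of_proof (v : 'cV[R]_3) : v != 0 -> \dim <[v]>%VS == 1%N.
Proof. by rewrite dim_vline => ->. Qed.

Definition line_of (v : 'cV[R]_3) (nz_v : v != 0) : line R :=
  exist _ <[v]>%VS (line_of_proof nz_v).

Definition cone U : set 'cV[R]_3 :=
  [set v | v != 0 /\ exists x : line R, U x /\ val x = <[v]>%VS].

Lemma open_nonzero : open [set v : 'cV[R]_3 | v != 0].
Proof.
have -> : [set v : 'cV[R]_3 | v != 0] = ~` [set v | v \in (0 : {vspace 'cV[R]_3})%VS].
  by apply/seteqP; split => v /=; rewrite memv0 => /negP.
by rewrite openC; exact: closed_vspace.
Qed.

Lemma cone_bigcap (I : Type) (D : set I) (F : I -> set (line R)) :
  cone (\bigcap_(i in D) F i) = [set v | v != 0] `&` \bigcap_(i in D) cone (F i).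
Proof.
apply/seteqP; split => v.
  move=> [nz_v [x [Fx ex]]]; split=> // i Di.
  by split => //; exists x; split => //; exact: Fx.
move=> [/= nz_v Fv]; split => //; exists (line_of nz_v); split => // i Di.
have [_ [x [Fx ex]]] := Fv i Di.
by have <- : x = line_of nz_v by exact: val_inj.
Qed.

Lemma RP2_open_bigcap (I : choiceType) (D : set I) (F : I -> set (line R)) :
  finite_set D -> (forall i, D i -> RP2_open (F i)) ->
  RP2_open (\bigcap_(i in D) F i).
Proof.
move=> finD oF; rewrite /RP2_open -/(cone _) cone_bigcap.
by apply: openI; [exact: open_nonzero | exact: open_bigcap_finite].
Qed.

Lemma RP2_interior_sub U : RP2_interior U `<=` U.
Proof. by move=> x [V [_ Vx VU]]; exact: VU. Qed.

Lemma RP2_interior_bigcap (I : choiceType) (D : set I) (F : I -> set (line R)) :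
  finite_set D ->
  \bigcap_(i in D) RP2_interior (F i) `<=` RP2_interior (\bigcap_(i in D) F i).
Proof.
move=> finD x xF.
have /choice [V hV] : forall i, exists V : set (line R),
    D i -> [/\ RP2_open V, V x & V `<=` F i].
  move=> i; have [Di|nDi] := pselect (D i); last by exists setT.
  by have [V hV] := xF i Di; exists V.
exists (\bigcap_(i in D) V i); split.
- by apply: RP2_open_bigcap => // i /hV [].
- by move=> i /hV [].
- by move=> w Vw i Di; have [_ _] := hV i Di; apply; exact: Vw.
Qed.

End ProjectivePlane.

Section MatrixAction.
Variable R : realType.
Implicit Types (U : set (line R)) (x y : line R) (A M : 'M[R]_3).

Lemma mxlinE M v : mxlin M v = M *m v.
Proof. by rewrite lfunE. Qed.

Lemma limg_mxlin_mul A M (V : {vspace 'cV[R]_3}) :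
  (mxlin (A *m M) @: V = mxlin A @: (mxlin M @: V))%VS.
Proof.
rewrite -limg_comp; congr (_ @: V)%VS.
by apply/lfunP => v; rewrite comp_lfunE !mxlinE mulmxA.
Qed.

Lemma limg_mxlin1 (V : {vspace 'cV[R]_3}) : (mxlin 1%:M @: V)%VS = V.
Proof.
rewrite -[RHS]lim1g; congr (_ @: V)%VS.
by apply/lfunP => v; rewrite id_lfunE mxlinE mul1mx.
Qed.

Lemma mxlin_ker0 M : M \in unitmx -> lker (mxlin M) == 0%VS.
Proof.
move=> unitM; apply/lker0P => u v; rewrite !mxlinE => eMuv.
by rewrite -(mulKmx unitM u) eMuv mulKmx.
Qed.

Lemma mem_mxker_scalar M c v : (v \in mxker (M - c%:M)) = (M *m v == c *: v).
Proof. by rewrite memv_ker mxlinE mulmxBl mul_scalar_mx subr_eq0. Qed.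

Lemma capv_mxker_scalar M a b :
  a != b -> (mxker (M - a%:M) :&: mxker (M - b%:M))%VS = 0%VS.
Proof.
move=> neq_ab; apply/eqP; rewrite -subv0; apply/subvP => v.
rewrite memv_cap !mem_mxker_scalar memv0 => /andP [/eqP -> /eqP /eqP].
by rewrite -subr_eq0 -scalerBl scaler_eq0 subr_eq0 (negbTE neq_ab).
Qed.

Lemma mem_mxker_sub_scalar M a b v :
  (mxker (M - a%:M) + mxker (M - b%:M))%VS = fullv ->
  M *m v - a *: v \in mxker (M - b%:M).
Proof.
move=> sum_full; have : v \in fullv by rewrite memvf.
rewrite -sum_full => /memv_addP [p pa [l lb ->]].
have /eqP Mp : M *m p == a *: p by rewrite -mem_mxker_scalar.
have /eqP Ml : M *m l == b *: l by rewrite -mem_mxker_scalar.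
rewrite mulmxDr Mp Ml scalerDr opprD addrA (addrC (a *: p)) addrK -scalerBl.
exact: memvZ.
Qed.

Lemma limg_mxker_comm A M :
  A \in unitmx -> A *m M = M *m A -> (mxlin A @: mxker M)%VS = mxker M.
Proof.
move=> unitA commAM; apply/eqP.
rewrite eqEdim limg_dim_eq ?(eqP (mxlin_ker0 unitA)) ?capv0 // leqnn andbT.
apply/subvP => _ /memv_imgP [v vM ->]; move: vM.
by rewrite !memv_ker !mxlinE mulmxA -commAM -mulmxA => /eqP ->; rewrite mulmx0.
Qed.

Lemma linemap_proof M (unitM : M \in unitmx) x : \dim (mxlin M @: val x)%VS == 1%N.
Proof. by rewrite limg_dim_eq ?line_dim // (eqP (mxlin_ker0 unitM)) capv0. Qed.

Definition linemap M (unitM : M \in unitmx) x : line R :=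
  exist _ (mxlin M @: val x)%VS (linemap_proof unitM x).

Definition linemapV M (unitM : M \in unitmx) : line R -> line R :=
  linemap (etrans (unitmx_inv M) unitM).

Section LineMap.
Variables (M : 'M[R]_3) (unitM : M \in unitmx).

Lemma limg_mxlinK (V : {vspace 'cV[R]_3}) :
  (mxlin (invmx M) @: (mxlin M @: V))%VS = V.
Proof. by rewrite -limg_mxlin_mul mulVmx ?limg_mxlin1. Qed.

Lemma limg_mxlinVK (V : {vspace 'cV[R]_3}) :
  (mxlin M @: (mxlin (invmx M) @: V))%VS = V.
Proof. by rewrite -limg_mxlin_mul mulmxV ?limg_mxlin1. Qed.

Lemma RP2_image_preimage U : RP2_image M U = linemapV unitM @^-1` U.
Proof.
apply/seteqP; split => y.
  move=> [x Ux ey] /=; suff -> : linemapV unitM y = x by [].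
  by apply: val_inj; rewrite /= ey limg_mxlinK.
by move=> Uy; exists (linemapV unitM y) => //; rewrite /= limg_mxlinVK.
Qed.

Lemma linemapVK y : linemap unitM (linemapV unitM y) = y.
Proof. by apply: val_inj; rewrite /= limg_mxlinVK. Qed.

End LineMap.
End MatrixAction.

Section Prepared.
Variables (R : realType) (g : 'M[R]_3) (L0 : {vspace 'cV[R]_3}).
Hypothesis unit_g : g \in unitmx.
Implicit Types (A X : set (line R)).

Definition saturated A := forall x y, A x -> (val y <= val x + L0)%VS -> A y.

Lemma saturatedP A : saturated A <-> A = \bigcup_(x in A) Pspace (val x + L0)%VS.
Proof.
split=> [satA | eA x y Ax sy].
  apply/seteqP; split=> [x Ax | y [x Ax sy]]; last exact: satA sy.
  by exists x => //; exact: addvSl.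
by rewrite eA; exists x.
Qed.

Lemma prepared_sub X A : prepared g L0 X A -> X `<=` A.
Proof. by case=> XA _ _ x /XA /RP2_interior_sub. Qed.

Lemma prepared_saturated X A : prepared g L0 X A -> saturated A.
Proof. by case=> _ _ /saturatedP. Qed.

Lemma prepared_bigcap X (I : choiceType) (D : set I) (As : I -> set (line R)) :
  finite_set D -> (forall i, D i -> prepared g L0 X (As i)) ->
  prepared g L0 X (\bigcap_(i in D) As i).
Proof.
move=> finD prepA; split.
- move=> x Xx; apply: RP2_interior_bigcap => // i /prepA [XA _ _]; exact: XA.
- rewrite (RP2_image_preimage unit_g) preimage_bigcap.
  apply: eq_bigcapr => i /prepA [_ + _]; by rewrite (RP2_image_preimage unit_g).
- apply/saturatedP => x y Ax sy i Di.
  exact: prepared_saturated (prepA i Di) _ _ (Ax i Di) sy.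
Qed.

End Prepared.

Lemma neq_invX2 (F : numFieldType) (mu : F) : 1 < mu -> mu != mu ^- 2.
Proof.
move=> mu_gt1; have mu_gt0 : 0 < mu by exact: lt_trans mu_gt1.
have : mu ^- 2 < 1 by rewrite invf_lt1 ?exprn_gt0 // exprn_egt1.
by move=> /lt_trans /(_ mu_gt1) /lt_eqF; rewrite eq_sym => ->.
Qed.

Section AvoidingNeighborhood.
Variables (R : realType) (g : 'M[R]_3) (mu : R) (m : nat).
Hypotheses (unit_g : g \in unitmx) (mu_gt1 : 1 < mu) (m_gt0 : (0 < m)%N).
Local Notation P0 := (mxker (g ^+ m - mu%:M)).
Local Notation L0 := (mxker (g ^+ m - (mu ^- 2)%:M)).
Hypotheses (dimP0 : \dim P0 = 2%N) (dimL0 : \dim L0 = 1%N).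

Lemma capv_P0_L0 : (P0 :&: L0)%VS = 0%VS.
Proof. exact/capv_mxker_scalar/neq_invX2. Qed.

Lemma addv_P0_L0 : (P0 + L0)%VS = fullv.
Proof.
apply/eqP; rewrite eqEdim subvf dimvf dim_matrix.
by have := dimv_sum_cap P0 L0; rewrite capv_P0_L0 dimv0 dimP0 dimL0 addn0 => ->.
Qed.

Lemma limg_gX_L0 k : (mxlin (g ^+ k) @: L0)%VS = L0.
Proof.
apply: limg_mxker_comm; first exact: unitrX.
by rewrite mulmxBr mulmxBl mul_mx_scalar mul_scalar_mx mulmxE -!exprD addnC.
Qed.

Lemma limg_gm_id (W : {vspace 'cV[R]_3}) : (L0 <= W)%VS -> (mxlin (g ^+ m) @: W)%VS = W.
Proof.
move=> sL0W; apply/eqP.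
rewrite eqEdim limg_dim_eq ?(eqP (mxlin_ker0 (unitrX m unit_g))) ?capv0 // leqnn andbT.
apply/subvP => _ /memv_imgP [v vW ->]; rewrite mxlinE -(subrK (mu *: v) (g ^+ m *m v)).
by apply: memvD; [exact: subvP sL0W _ (mem_mxker_sub_scalar v addv_P0_L0) | exact: memvZ].
Qed.

Section Orbit.
Variables (X : set (line R)) (y : line R).
Hypotheses (gX : RP2_image g X = X) (XP0 : forall x, X x -> (val x <= P0)%VS).
Hypothesis y_off : ~ exists2 x, X x & (val y <= val x + L0)%VS.

Definition orbit_plane k := (mxlin (g ^+ k) @: (val y + L0))%VS.

Lemma orbit_planeS k : orbit_plane k.+1 = (mxlin g @: orbit_plane k)%VS.
Proof. by rewrite /orbit_plane exprS -mulmxE limg_mxlin_mul. Qed.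

Lemma orbit_plane_addm k : orbit_plane (k + m) = orbit_plane k.
Proof. by rewrite /orbit_plane exprD -mulmxE limg_mxlin_mul limg_gm_id ?addvSr. Qed.

Lemma orbit_plane_mod k : orbit_plane k = orbit_plane (k %% m).
Proof.
rewrite {1}(divn_eq k m) addnC; elim: (k %/ m)%N => [|q IHq]; first by rewrite addn0.
by rewrite mulSn addnCA addnC orbit_plane_addm.
Qed.

Lemma L0_sub_orbit_plane k : (L0 <= orbit_plane k)%VS.
Proof. by rewrite -(limg_gX_L0 k) limgS ?addvSr. Qed.

Lemma limg_g_sub_orbit_plane (V : {vspace 'cV[R]_3}) k :
  (mxlin g @: V <= orbit_plane k.+1)%VS = (V <= orbit_plane k)%VS.
Proof. by rewrite orbit_planeS limg_ker0 ?mxlin_ker0. Qed.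

Definition off_orbit_planes := [set w : line R | forall k, ~ (val w <= orbit_plane k)%VS].

(* L0 must be added for saturation: it lies in every plane x + L0. *)
Definition avoiding_set := [set w : line R | val w = L0 \/ off_orbit_planes w].

Lemma open_off_orbit_planes : RP2_open off_orbit_planes.
Proof.
rewrite /RP2_open -/(cone _).
have -> : cone off_orbit_planes = ~` \bigcup_(k in `I_m) [set v | v \in orbit_plane k].
  apply/seteqP; split => v.
    by move=> [_ [w [off_w ew]]] [k _ vQ]; apply: (off_w k); rewrite ew -memvE.
  move=> /= v_off; have nz_v : v != 0.
    by apply: contra_notN v_off => /eqP ->; exists 0%N => //; exact: mem0v.
  split => //; exists (line_of nz_v); split => // k vQ.
  by apply: v_off; exists (k %% m)%N; [exact: ltn_pmod | rewrite /= -orbit_plane_mod memvE].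
rewrite openC; apply: closed_bigcup => [|k _]; [exact: finite_II | exact: closed_vspace].
Qed.

Lemma line_P0_neq_L0 (x : line R) : (val x <= P0)%VS -> val x != L0.
Proof.
move=> xP0; apply/eqP => ex.
have : (L0 <= P0 :&: L0)%VS by rewrite subv_cap -{1}ex xP0 subvv.
by rewrite capv_P0_L0 subv0 => /eqP L0_0; move: dimL0; rewrite L0_0 dimv0.
Qed.

Lemma X_off_orbit_planes : X `<=` off_orbit_planes.
Proof.
have XV x : X x -> X (linemapV unit_g x) by rewrite -{1}gX (RP2_image_preimage unit_g).
suff off k x : X x -> ~ (val x <= orbit_plane k)%VS by move=> x Xx k; exact: off.
elim: k x => [|k IHk] x Xx.
  rewrite /orbit_plane expr0 limg_mxlin1 => sxy; apply: y_off; exists x => //.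
  have sx : (val x + L0 <= val y + L0)%VS by rewrite subv_add sxy addvSr.
  rewrite (addv_lines_eq (line_dim x) (line_dim y) dimL0 (line_P0_neq_L0 (XP0 Xx)) sx).
  exact: addvSl.
rewrite -(limg_mxlinVK unit_g (val x)) limg_g_sub_orbit_plane; exact: IHk (XV x Xx).
Qed.

Lemma avoiding_set_linemap w : avoiding_set (linemap unit_g w) <-> avoiding_set w.
Proof.
have gw_L0 : (val (linemap unit_g w) == L0) = (val w == L0).
  by rewrite /= -{1}(limg_gX_L0 1) expr1 eq_limg_ker0 ?mxlin_ker0.
split=> [[/eqP|off_gw] | [/eqP|off_w]].
- by rewrite gw_L0 => /eqP; left.
- by right=> k; rewrite -limg_g_sub_orbit_plane; exact: off_gw.
- by rewrite -gw_L0 => /eqP; left.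
- right=> k; rewrite -orbit_plane_addm -(prednK m_gt0) addnS.
  by rewrite limg_g_sub_orbit_plane; exact: off_w.
Qed.

Lemma RP2_image_avoiding_set : RP2_image g avoiding_set = avoiding_set.
Proof.
rewrite (RP2_image_preimage unit_g); apply/seteqP; split => w /=.
  by rewrite -{2}(linemapVK unit_g w) avoiding_set_linemap.
by rewrite -(avoiding_set_linemap (linemapV unit_g w)) linemapVK.
Qed.

Lemma saturated_avoiding_set : saturated L0 avoiding_set.
Proof.
move=> x z [ex | off_x] szx; have [ez | nez] := eqVneq (val z) L0; [by left | | by left |].
  by move: szx nez; rewrite ex addvv eqEdim line_dim dimL0 => ->.
right=> k szk; apply: (off_x k); apply: subv_trans (addvSl (val x) L0) _.
have sxz : (val z + L0 <= val x + L0)%VS by rewrite subv_add szx addvSr.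
rewrite -(addv_lines_eq (line_dim z) (line_dim x) dimL0 nez sxz).
by rewrite subv_add szk L0_sub_orbit_plane.
Qed.

Lemma prepared_avoiding_set : prepared g L0 X avoiding_set.
Proof.
split; last exact/saturatedP/saturated_avoiding_set.
- move=> x Xx; exists off_orbit_planes; split; first exact: open_off_orbit_planes.
    exact: X_off_orbit_planes.
  by move=> w off_w; right.
- exact: RP2_image_avoiding_set.
Qed.

Lemma avoiding_set_y x0 : X x0 -> ~ avoiding_set y.
Proof.
move=> Xx0 [ey | /(_ 0%N)]; first by apply: y_off; exists x0; rewrite // ey addvSr.
by rewrite /orbit_plane expr0 limg_mxlin1 addvSl.
Qed.

End Orbit.

Lemma exists_prepared_avoiding (X : set (line R)) y :
  RP2_image g X = X -> (forall x, X x -> (val x <= P0)%VS) ->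
  ~ (exists2 x, X x & (val y <= val x + L0)%VS) ->
  exists2 A, prepared g L0 X A & ~ A y.
Proof.
move=> gX XP0 y_off; have [[x0 Xx0] | X0] := pselect (exists x, X x).
  exists (avoiding_set y); first exact: prepared_avoiding_set.
  exact: avoiding_set_y Xx0.
exists set0 => //; split.
- by move=> x Xx; case: X0; exists x.
- by apply/seteqP; split=> w // [].
- by apply/seteqP; split=> w // [].
Qed.

End AvoidingNeighborhood.

Unset Implicit Arguments.
Set Strict Implicit.

Theorem mainTheorem11 (R : realType) (g : 'M[R]_3) (mu : R) (m : nat)
  (X : set (line R)) :
  \det g = 1 -> 1 < mu -> (0 < m)%N ->
  \dim (mxker (g ^+ m - mu%:M)) = 2%N ->
  \dim (mxker (g ^+ m - (mu ^- 2)%:M)) = 1%N ->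
  finite_set X -> RP2_image g X = X ->
  (forall x, X x -> (val x <= mxker (g ^+ m - mu%:M))%VS) ->
  let L0 := mxker (g ^+ m - (mu ^- 2)%:M) in
  let cA := [set A : set (line R) | prepared g L0 X A] in
  (forall (n : nat) (As : 'I_n.+1 -> set (line R)),
      (forall i, cA (As i)) -> cA (\bigcap_(i in setT) As i)) /\
  \bigcap_(A in cA) A = \bigcup_(x in X) Pspace (val x + L0)%VS.
Proof.
move=> det_g mu_gt1 m_gt0 dimP0 dimL0 _ gX XP0 L0 cA.
have unit_g : g \in unitmx by rewrite unitmxE det_g unitr1.
split=> [n As prepA | ].
  by apply: prepared_bigcap => // [|i _]; [exact: finite_finset | exact: prepA].
apply/seteqP; split=> [y yA | y [x Xx sy] A prepA].
  apply: contrapT => y_off.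
  have [A prepA nAy] := exists_prepared_avoiding unit_g mu_gt1 m_gt0 dimP0 dimL0 gX XP0 y_off.
  exact: nAy (yA A prepA).
exact: prepared_saturated prepA _ _ (prepared_sub prepA Xx) sy.
Qed.
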